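(* Let $X$ be a transitive subshift whose language $\mathcal L$ has eventually constant growth with rate $K$, and let $x\in X$. Then either $\mathcal L$ is periodic, or there is $N$ such that for all $n\ge N$, all $j\in\mathbb N$ and both $\mathfrak s=\ell$ and $\mathfrak s=r$, the word $x_{[j,j+(K+2)n-2]}$ contains some $\mathfrak s$-special word $w\in\mathcal L_n$ as a subword.
   Context: A subshift is a nonempty closed $X\subseteq\mathcal A^{\mathbb N}$ ($\mathcal A$ finite) with $SX=X$ for the left shift $(Sx)_i=x_{i+1}$; transitive means for all nonempty open $U,V\subseteq X$ some $S^n(U)\cap V\ne\emptyset$. $\mathcal L$ is the set of finite nonempty words occurring in points of $X$, $\mathcal L_n$ those of length $n$, $p(n)=|\mathcal L_n|$, and $x_{[i,j]}=x_i\cdots x_j$. Eventually constant growth with rate $K$: there are $N_0,C$ with $p(n)=Kn+C$ for all $n\ge N_0$. Periodic: there is $P$ with $w_i=w_{i+P}$ for all $w\in\mathcal L$, $1\le i\le |w|-P$. $w$ is $\ell$-special if $|\{a:aw\in\mathcal L\}|\ge 2$, $r$-special if $|\{b:wb\in\mathcal L\}|\ge2$. *)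

From Stdlib Require Import ClassicalEpsilon.
From mathcomp Require Import all_boot all_order all_algebra.
Set Implicit Arguments. Unset Strict Implicit. Unset Printing Implicit Defensive.

Definition pbool (P : Prop) : bool :=
  if excluded_middle_informative P then true else false.

Section Subshift.
Variable A : finType.

Definition pt := nat -> A.

Definition shift (x : pt) : pt := fun i => x i.+1.

(* x_{[i, i+n-1]} : the word of length n starting at position i *)
Definition subword (x : pt) (i n : nat) : seq A := [seq x (i + k) | k <- iota 0 n].

(* closedness in the product topology *)
Definition closedS (X : pt -> Prop) : Prop :=
  forall x : pt, (forall m, exists y, X y /\ forall k, k < m -> y k = x k) -> X x.

Definition subshift (X : pt -> Prop) : Prop :=
  [/\ exists x, X x,
      closedS X,
      (forall x, X x -> X (shift x)) &
      (forall y, X y -> exists x, X x /\ shift x = y)].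

(* U is an open subset of X in the relative (product) topology *)
Definition openIn (X U : pt -> Prop) : Prop :=
  (forall x, U x -> X x) /\
  (forall x, U x -> exists m, forall y, X y -> (forall k, k < m -> y k = x k) -> U y).

Definition transitiveS (X : pt -> Prop) : Prop :=
  forall U V : pt -> Prop, openIn X U -> openIn X V ->
    (exists u, U u) -> (exists v, V v) ->
    exists n : nat, exists u, U u /\ V (iter n shift u).

Definition inL (X : pt -> Prop) (w : seq A) : Prop :=
  w <> [::] /\ exists x, X x /\ exists i, w = subword x i (size w).

Definition complexity (X : pt -> Prop) (n : nat) : nat :=
  #|[set t : n.-tuple A | pbool (inL X (tval t))]|.

Definition ecg (X : pt -> Prop) (K : nat) : Prop :=
  exists (N0 : nat) (C : int), forall n, N0 <= n ->
    ((complexity X n)%:Z = (K * n)%:Z + C)%R.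

(* periodic language (period P >= 1); indices 0-based *)
Definition periodicL (X : pt -> Prop) : Prop :=
  exists P : nat, 0 < P /\
    forall (w : seq A) (x0 : A), inL X w -> forall i, i + P < size w ->
      nth x0 w i = nth x0 w (i + P).

Definition lspecial (X : pt -> Prop) (w : seq A) : Prop :=
  exists a b : A, a <> b /\ inL X (a :: w) /\ inL X (b :: w).

Definition rspecial (X : pt -> Prop) (w : seq A) : Prop :=
  exists a b : A, a <> b /\ inL X (rcons w a) /\ inL X (rcons w b).

End Subshift.

From mathcomp Require Import all_boot all_order all_algebra.
From mathcomp Require Import zify.
From Stdlib Require Import Classical ClassicalEpsilon.
Set Implicit Arguments. Unset Strict Implicit. Unset Printing Implicit Defensive.

(* For large n the complexity satisfies p(n) = Kn + C < (K+1)n, so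
   among the (K+1)n length-n words starting in a window of length (K+2)n - 1 of x
   two coincide: the window contains a block x_[b, b+P+n-1] of period P.  Let c be
   the P-periodic point generated by x_[b, b+P-1]; each length-n word of c, together
   with the letters on both sides of it, is read inside the window.
   - If no length-n word of the window is r-special, any point of X that agrees
     with c on n consecutive letters keeps agreeing with it to the right; by
     transitivity every word of L then occurs in c, so L is P-periodic.
   - If no such word is l-special, agreement propagates to the left instead, and
     transitivity again shows that every word of L occurs in c. *)

Section Words.
Variable A : finType.
Implicit Types (X : pt A -> Prop) (y z : pt A).

Definition agree y (i : nat) z (k l : nat) : Prop :=
  forall t, t < l -> y (i + t) = z (k + t).

Lemma agreeW y i z k l l' : l' <= l -> agree y i z k l -> agree y i z k l'.
Proof. by move=> hl H t ht; apply: H; apply: leq_trans hl. Qed.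

Lemma size_subword z i l : size (subword z i l) = l.
Proof. by rewrite /subword size_map size_iota. Qed.

Lemma nth_subword x0 z i l t : t < l -> nth x0 (subword z i l) t = z (i + t).
Proof. by move=> ht; rewrite /subword (nth_map 0) ?size_iota // nth_iota. Qed.

Lemma subword_eqP y i z k l : subword y i l = subword z k l <-> agree y i z k l.
Proof.
split=> [E t ht | H].
  by have := congr1 (nth (y 0) ^~ t) E; rewrite /= !nth_subword.
apply: (@eq_from_nth _ (y 0)); rewrite ?size_subword // => t ht.
by rewrite !nth_subword // H.
Qed.

Lemma subword_cat z j p q :
  subword z j (p + q) = subword z j p ++ subword z (j + p) q.
Proof.
rewrite /subword iotaD map_cat; congr (_ ++ _).
rewrite -[p in iota p]addn0 iotaDl -map_comp.
by apply: eq_map => k /=; rewrite addnA.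
Qed.

Lemma subword_rcons z i l : subword z i l.+1 = rcons (subword z i l) (z (i + l)).
Proof. by rewrite -addn1 subword_cat cats1 /subword /= addn0. Qed.

Lemma subword_cons z i l : subword z i l.+1 = z i :: subword z (i + 1) l.
Proof. by rewrite -add1n subword_cat /subword /= addn0. Qed.

Lemma infix_subword z j i l mm : i + l <= mm ->
  infix (subword z (j + i) l) (subword z j mm).
Proof.
move=> h; rewrite -(subnKC h) -[i + l + _]addnA.
by rewrite subword_cat subword_cat infix_infix.
Qed.

Lemma iter_shift t z s : iter t (@shift A) z s = z (t + s).
Proof. by elim: t s => [|t IH] s //=; rewrite /shift IH addnS. Qed.

Lemma inL_subword X z i l : X z -> 0 < l -> inL X (subword z i l).
Proof.
move=> Xz hl; split; last by exists z; split => //; exists i; rewrite size_subword.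
by move/(congr1 size); rewrite size_subword; move: hl => /[swap] ->.
Qed.

Lemma inL_elim X w : inL X w -> exists z i, X z /\ w = subword z i (size w).
Proof. by case=> _ [z [Xz [i ->]]]; exists z, i; rewrite size_subword. Qed.

End Words.

Section Transitivity.
Variable A : finType.
Variable X : pt A -> Prop.
Hypothesis HX : subshift X.
Hypothesis HT : transitiveS X.

Lemma subshift_iter t z : X z -> X (iter t (@shift A) z).
Proof. by case: HX => _ _ Hs _; elim: t => //= t IH /IH /Hs. Qed.

Lemma transitive_blocks n y1 i1 y2 i2 : X y1 -> X y2 ->
  exists t u, [/\ X u, agree u 0 y1 i1 n & agree u t y2 i2 n].
Proof.
pose cyl y i z := X z /\ agree z 0 y i n.
have cyl_open y i : openIn X (cyl y i).
  split=> [z [] //|z [Xz Hz]]; exists n => y' Xy' Hy'; split=> // t ht.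
  by rewrite -Hz // add0n Hy'.
have cyl_ne y i : X y -> exists z, cyl y i z.
  move=> Xy; exists (iter i (@shift A) y); split; first exact: subshift_iter.
  by move=> t _; rewrite iter_shift add0n.
move=> X1 X2; have [t [u [[Xu H1] [_ H2]]]] :=
  HT (cyl_open y1 i1) (cyl_open y2 i2) (cyl_ne _ _ X1) (cyl_ne _ _ X2).
by exists t, u; split=> // s hs; rewrite -H2 // iter_shift add0n.
Qed.

End Transitivity.

(* Pigeonhole: if fewer than M words of length n are in L, then among the words
   of x starting at j, ..., j + M - 1 two coincide, giving a block of period P. *)
Lemma repeated_block (A : finType) (X : pt A -> Prop) (x : pt A) j n M :
  X x -> 0 < n -> complexity X n < M ->
  exists a P, [/\ 0 < P, a + P < M &
    forall s, s < n -> x (j + a + s + P) = x (j + a + s)].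
Proof.
move=> Xx Hn Hc.
pose f (i : 'I_M) : n.-tuple A := Tuple (introT eqP (size_subword x (j + i) n)).
have /injectivePn [i1 [i2 ne /(congr1 val) /subword_eqP Ag]] : ~~ injectiveb f.
  apply: contraTN Hc => /injectiveP inj; rewrite -leqNgt /complexity.
  rewrite -[M]card_ord -cardsT -(card_imset _ inj); apply: subset_leq_card.
  apply/subsetP => _ /imsetP [i _ ->]; rewrite inE /pbool.
  case: excluded_middle_informative => // notL.
  by exfalso; apply: notL; apply: inL_subword.
have h1 := ltn_ord i1; have h2 := ltn_ord i2.
case: (ltngtP i1 i2) => h; last by rewrite (val_inj h) eqxx in ne.
- by exists i1, (i2 - i1); split; [lia | lia |] => s hs; rewrite Ag //; congr x; lia.
- by exists i2, (i1 - i2); split; [lia | lia |] => s hs; rewrite -Ag //; congr x; lia.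
Qed.

Section PeriodicBlock.
Variable A : finType.
Variable X : pt A -> Prop.
Hypothesis HX : subshift X.
Hypothesis HT : transitiveS X.
Variable x : pt A.
Hypothesis Xx : X x.
Variables b n P : nat.
Hypothesis Hn : 0 < n.
Hypothesis HP : 0 < P.
Hypothesis Hrep : forall s, s < n -> x (b + s + P) = x (b + s).

Definition cper (k : nat) : A := x (b + k %% P).

Lemma cperD k : cper (k + P) = cper k.
Proof. by rewrite /cper modnDr. Qed.

Lemma cper_bump y i k l :
  agree y i cper k l -> forall q, agree y i cper (k + q * P) l.
Proof.
by move=> H q t ht; rewrite H // /cper addnAC [_ + q * P]addnC modnMDl.
Qed.

Lemma x_mod u : u < P + n -> x (b + u %% P) = x (b + u).
Proof.
elim/ltn_ind: u => u IH hu; case: (ltnP u P) => hup; first by rewrite modn_small.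
rewrite -(subnK hup) modnDr IH; [|lia|lia].
by rewrite addnA Hrep //; lia.
Qed.

Lemma cper_block k : agree cper k x (b + k %% P) n.+1.
Proof.
move=> t ht; rewrite /cper -modnDml x_mod ?addnA //.
by have := ltn_pmod k HP; lia.
Qed.

Lemma agree_cper0 y i : agree y i x b n -> agree y i cper 0 n.
Proof.
move=> H t ht; have := cper_block 0 (ltnW ht).
by rewrite mod0n addn0 add0n => ->; rewrite H.
Qed.

Lemma periodic_of_cper_universal :
  (forall z i l, X z -> exists k, agree z i cper k l) -> periodicL X.
Proof.
move=> Hu; exists P; split=> // w x0 /inL_elim [z [i [Xz Ew]]] s hs.
have [k Hk] := Hu z i (size w) Xz.
rewrite Ew !nth_subword ?size_subword; [|lia|lia].
by rewrite !Hk; [rewrite addnA cperD | lia | lia].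
Qed.

Section RightExtension.
Hypothesis nonspecial : forall r, r < P -> ~ rspecial X (subword x (b + r) n).

Lemma agree_cper_next z i k : X z -> agree z i cper k n -> z (i + n) = cper (k + n).
Proof.
move=> Xz H; have hr := ltn_pmod k HP; have Hc := cper_block k.
have Hw : subword z i n = subword x (b + k %% P) n.
  by apply/subword_eqP => t ht; rewrite H // Hc //; lia.
apply: NNPP => hne; apply: (nonspecial hr).
exists (z (i + n)), (x (b + k %% P + n)); split; [|split].
- by rewrite -(Hc n).
- by rewrite -Hw -subword_rcons; apply: inL_subword.
- by rewrite -subword_rcons; apply: inL_subword.
Qed.

Lemma agree_cper_right l z i k : X z -> agree z i cper k n -> agree z i cper k l.
Proof.
move=> Xz H; elim: l => [|l IH] t ht //; case: (ltnP t l) => htl; first exact: IH.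
have -> : t = l by lia.
case: (ltnP l n) => hln; first exact: H.
have := @agree_cper_next z (i + (l - n)) (k + (l - n)) Xz.
rewrite -!addnA subnK //; apply=> s hs.
by rewrite -!addnA; apply: IH; lia.
Qed.

Lemma rnonspecial_periodic : periodicL X.
Proof.
apply: periodic_of_cper_universal => z i l Xz.
have [t [u [Xu /agree_cper0 Hu H2]]] := transitive_blocks HX HT n b i Xx Xz.
have Hu' := agree_cper_right (l := t + n) Xu Hu.
exists t; apply: agree_cper_right => // s hs.
by rewrite -H2 // -[t + s]add0n Hu' //; lia.
Qed.

End RightExtension.

Section LeftExtension.
Hypothesis nonspecial : forall r, r < P -> ~ lspecial X (subword x (b + r + 1) n).

Lemma agree_cper_prev z i k :
  X z -> agree z (i + 1) cper (k + 1) n -> z i = cper k.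
Proof.
move=> Xz H; have hr := ltn_pmod k HP; have Hc := cper_block k.
have Hw : subword z (i + 1) n = subword x (b + k %% P + 1) n.
  by apply/subword_eqP => t ht; rewrite H // -addnA Hc ?addnA //; lia.
apply: NNPP => hne; apply: (nonspecial hr).
exists (z i), (x (b + k %% P)); split; [|split].
- by have := Hc 0 isT; rewrite !addn0 => <-.
- by rewrite -Hw -subword_cons; apply: inL_subword.
- by rewrite -subword_cons; apply: inL_subword.
Qed.

Lemma agree_cper_left l z i k :
  X z -> agree z (i + l) cper (k + l) n -> agree z i cper k (l + n).
Proof.
move=> Xz; elim: l i k => [|l IH] i k; first by rewrite !addn0 add0n.
move=> H; have H' : agree z (i + 1) cper (k + 1) (l + n).
  by apply: IH; rewrite -!addnA !add1n.
have h0 : z i = cper k by apply: (agree_cper_prev Xz); apply: agreeW H'; lia.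
move=> [|t] ht; first by rewrite !addn0.
by have := H' t; rewrite -!addnA !add1n !addnS => -> //; lia.
Qed.

Lemma block_in_cper z i q : X z -> exists k, q <= k /\ agree z i cper k n.
Proof.
move=> Xz; have [t [u [Xu H1 /agree_cper0 Hu]]] := transitive_blocks HX HT n i b Xz Xx.
have tqP : t + q <= (t + q) * P := leq_pmulr (t + q) HP.
have Hu' : agree u 0 cper ((t + q) * P - t) (t + n).
  apply: agree_cper_left => //; rewrite add0n subnK; last lia.
  by have := cper_bump Hu (t + q); rewrite add0n.
exists ((t + q) * P - t); split; first lia.
by move=> s hs; rewrite -[i + s]add0n -H1 // Hu' //; lia.
Qed.

Lemma lnonspecial_periodic : periodicL X.
Proof.
apply: periodic_of_cper_universal => z i l Xz.
have [k [hk Hk]] := block_in_cper (i + l) l Xz.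
exists (k - l); apply: (agreeW (leq_addr n l)); apply: agree_cper_left => //.
by rewrite subnK.
Qed.

End LeftExtension.
End PeriodicBlock.

Lemma ecg_complexity_lt (A : finType) (X : pt A -> Prop) K : ecg X K ->
  exists N, 0 < N /\ forall n, N <= n -> complexity X n < (K + 1) * n.
Proof.
move=> [N0 [C HC]]; exists (N0 + (absz C).+1); split=> [|n hn]; first lia.
by have := HC n ltac:(lia); move: hn; clear HC; case: C => c /= hn; lia.
Qed.

Theorem mainTheorem8 (A : finType) (X : pt A -> Prop) (K : nat) (x : pt A) :
  subshift X -> transitiveS X -> ecg X K -> X x ->
  periodicL X \/
  exists N : nat, forall n : nat, N <= n -> forall j : nat,
    (exists w : seq A, [/\ inL X w, size w = n, lspecial X w &
        infix w (subword x j ((K + 2) * n - 1))]) /\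
    (exists w : seq A, [/\ inL X w, size w = n, rspecial X w &
        infix w (subword x j ((K + 2) * n - 1))]).
Proof.
move=> HX HT /ecg_complexity_lt [N [N_gt0 HN]] Xx.
case: (classic (periodicL X)) => [|nP]; [by left | right].
exists N => n hn j; have Hn : 0 < n by lia.
have [a [P [HP haP Hrep]]] := repeated_block j Xx Hn (HN n hn).
have [r [hr Hl]] : exists r, r < P /\ lspecial X (subword x (j + a + r + 1) n).
  apply: NNPP => none; apply/nP/(lnonspecial_periodic HX HT Xx Hn HP Hrep).
  by move=> r hr Hsp; apply: none; exists r.
have [r' [hr' Hr]] : exists r, r < P /\ rspecial X (subword x (j + a + r) n).
  apply: NNPP => none; apply/nP/(rnonspecial_periodic HX HT Xx Hn HP Hrep).
  by move=> r0 hr0 Hsp; apply: none; exists r0.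
split; [exists (subword x (j + a + r + 1) n) | exists (subword x (j + a + r') n)];
  (split; [exact: inL_subword | exact: size_subword | by [] |]);
  rewrite -!addnA; apply: infix_subword; lia.
Qed.
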